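(* Let $r,s,t,a,b,c$ be real numbers with $t\neq0$, and let $H_n^{(3)}$ and $h_n^{(3)}$ be the third-order Horadam and generalized Tribonacci numbers defined in the context. Then for every integer $n\ge0$, $$\big(H_{n+2}^{(3)}\big)^{2}+s\big(H_{n+1}^{(3)}\big)^{2}+2tH_{n}^{(3)}H_{n+1}^{(3)}=(c^{2}+sb^{2}+2tab)h_{2n+1}^{(3)}+\big(b^{2}(t-rs)+2tac+2sbc-2rtab\big)h_{2n}^{(3)}+t(ta^{2}-rb^{2}+2bc)h_{2n-1}^{(3)}$$ $$=cH_{2n+2}^{(3)}+(sb+ta)H_{2n+1}^{(3)}+tbH_{2n}^{(3)}.$$
   Context: Third-order Horadam numbers: $H_0^{(3)}=a$, $H_1^{(3)}=b$, $H_2^{(3)}=c$, $H_{n+3}^{(3)}=rH_{n+2}^{(3)}+sH_{n+1}^{(3)}+tH_n^{(3)}$ for $n\ge0$. Generalized Tribonacci numbers: $h_0^{(3)}=0$, $h_1^{(3)}=1$, $h_2^{(3)}=r$, $h_{n+3}^{(3)}=rh_{n+2}^{(3)}+sh_{n+1}^{(3)}+th_n^{(3)}$ for $n\ge0$; the value $h_{-1}^{(3)}$ (needed for $n=0$) is obtained by running the recurrence backwards, giving $h_{-1}^{(3)}=0$. *)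

From Stdlib Require Import Reals.
Open Scope R_scope.

Fixpoint horadam3 (r s t a b c : R) (n : nat) {struct n} : R :=
  match n with
  | 0%nat => a
  | 1%nat => b
  | 2%nat => c
  | S ((S (S m as q)) as p) =>
      r * horadam3 r s t a b c p + s * horadam3 r s t a b c q
      + t * horadam3 r s t a b c m
  end.

(* tribS r s t k = h_{k-1}^(3): the generalized Tribonacci sequence shifted
   by one so that the backwards value h_{-1} = 0 is included:
   h_{-1}=0, h_0=0, h_1=1, h_2=r, and the recurrence holds from h_{-1} on. *)
Fixpoint tribS (r s t : R) (k : nat) {struct k} : R :=
  match k with
  | 0%nat => 0
  | 1%nat => 0
  | 2%nat => 1
  | S ((S (S m as q)) as p) =>
      r * tribS r s t p + s * tribS r s t q + t * tribS r s t m
  end.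

Definition trib3 (r s t : R) (n : nat) : R := tribS r s t (S n).

(* h_{n-1}^(3) for n >= 0 (with h_{-1} = 0) *)
Definition trib3_pred (r s t : R) (n : nat) : R := tribS r s t n.

From Stdlib Require Import Reals Lra Lia.
Open Scope R_scope.

(* For two solutions X, Y of the recurrence, the pairing
   P(m, k) = X_(m+2) Y_(k+2) + X_(m+1) (s Y_(k+1) + t Y_k) + t X_m Y_(k+1)
   satisfies P(m+1, k) = P(m, k+1), hence P(n, n) = P(0, 2n); for X = Y = H
   this is the second identity.  The first follows by expanding H_(2n),
   H_(2n+1), H_(2n+2) in the Tribonacci numbers: a solution is determined by
   three consecutive values, so X_(j+k) = X_j h_(k+1) + (X_(j+1) - r X_j) h_k
   + (X_(j+2) - r X_(j+1) - s X_j) h_(k-1). *)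

Section ThirdOrderRecurrence.

Variables r s t : R.

Definition rec3 (X : nat -> R) : Prop :=
  forall m, X (S (S (S m))) = r * X (S (S m)) + s * X (S m) + t * X m.

Lemma horadam3_rec3 (a b c : R) : rec3 (horadam3 r s t a b c).
Proof. intro m. reflexivity. Qed.

Lemma tribS_rec3 : rec3 (tribS r s t).
Proof. intro m. reflexivity. Qed.

Lemma rec3_ext (X Y : nat -> R) :
  rec3 X -> rec3 Y -> X 0%nat = Y 0%nat -> X 1%nat = Y 1%nat -> X 2%nat = Y 2%nat ->
  forall n, X n = Y n.
Proof.
  intros HX HY E0 E1 E2 n.
  assert (E : forall k, X k = Y k /\ X (S k) = Y (S k) /\ X (S (S k)) = Y (S (S k))).
  { induction k as [|k [Ek [ESk ESSk]]].
    - auto.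
    - repeat split; [assumption | assumption |].
      rewrite HX, HY, Ek, ESk, ESSk. reflexivity. }
  apply E.
Qed.

Lemma rec3_tribS_expansion (X : nat -> R) (HX : rec3 X) (j k : nat) :
  X (k + j)%nat =
  X j * tribS r s t (k + 2)%nat
  + (X (j + 1)%nat - r * X j) * tribS r s t (k + 1)%nat
  + (X (j + 2)%nat - r * X (j + 1)%nat - s * X j) * tribS r s t k.
Proof.
  rewrite !Nat.add_succ_r, !Nat.add_0_r.
  revert k. apply (rec3_ext (fun i => X (i + j)%nat)).
  - intro k. apply HX.
  - intro k. rewrite !tribS_rec3. ring.
  - simpl. ring.
  - simpl. ring.
  - simpl. ring.
Qed.

Definition rec3_pairing (X Y : nat -> R) (m k : nat) : R :=
  X (S (S m)) * Y (S (S k)) + X (S m) * (s * Y (S k) + t * Y k)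
  + t * X m * Y (S k).

Section Pairing.

Variables X Y : nat -> R.
Hypothesis HX : rec3 X.
Hypothesis HY : rec3 Y.

Lemma rec3_pairing_shift (m k : nat) :
  rec3_pairing X Y (S m) k = rec3_pairing X Y m (S k).
Proof. unfold rec3_pairing. rewrite HX, HY. ring. Qed.

Lemma rec3_pairing_transfer (m k : nat) :
  rec3_pairing X Y m k = rec3_pairing X Y 0 (m + k).
Proof.
  revert k. induction m as [|m IH]; intro k.
  - reflexivity.
  - rewrite rec3_pairing_shift, IH, <- plus_n_Sm. reflexivity.
Qed.

End Pairing.

Lemma rec3_square_form (X : nat -> R) (HX : rec3 X) (n : nat) :
  X (n + 2)%nat ^ 2 + s * X (n + 1)%nat ^ 2 + 2 * t * X n * X (n + 1)%nat
  = X 2%nat * X (2 * n + 2)%nat + (s * X 1%nat + t * X 0%nat) * X (2 * n + 1)%nat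
    + t * X 1%nat * X (2 * n)%nat.
Proof.
  pose proof (rec3_pairing_transfer X X HX HX n n) as E.
  unfold rec3_pairing in E.
  replace (n + n)%nat with (2 * n)%nat in E by lia.
  rewrite !Nat.add_succ_r, !Nat.add_0_r.
  lra.
Qed.

End ThirdOrderRecurrence.

Theorem corollary3p5 (r s t a b c : R) (ht : t <> 0) (n : nat) :
  let H := horadam3 r s t a b c in
  let h := trib3 r s t in
  (H (n + 2)%nat) ^ 2 + s * (H (n + 1)%nat) ^ 2 + 2 * t * H n * H (n + 1)%nat
  = (c ^ 2 + s * b ^ 2 + 2 * t * a * b) * h (2 * n + 1)%nat
    + (b ^ 2 * (t - r * s) + 2 * t * a * c + 2 * s * b * c - 2 * r * t * a * b)
      * h (2 * n)%nat
    + t * (t * a ^ 2 - r * b ^ 2 + 2 * b * c) * trib3_pred r s t (2 * n)%nat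
  /\
  (H (n + 2)%nat) ^ 2 + s * (H (n + 1)%nat) ^ 2 + 2 * t * H n * H (n + 1)%nat
  = c * H (2 * n + 2)%nat + (s * b + t * a) * H (2 * n + 1)%nat
    + t * b * H (2 * n)%nat.
Proof.
  intros H h.
  pose proof (rec3_square_form r s t H (horadam3_rec3 r s t a b c) n) as Hsq.
  split; [rewrite Hsq | exact Hsq].
  unfold h, trib3, trib3_pred, H.
  set (m := (2 * n)%nat); clearbody m.
  replace (S (m + 1)) with (m + 2)%nat by lia.
  replace (S m) with (m + 1)%nat by lia.
  pose proof (rec3_tribS_expansion r s t _ (horadam3_rec3 r s t a b c) 0 m) as E0.
  rewrite Nat.add_0_r in E0.
  rewrite (rec3_tribS_expansion r s t _ (horadam3_rec3 r s t a b c) 2 m),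
    (rec3_tribS_expansion r s t _ (horadam3_rec3 r s t a b c) 1 m), E0.
  cbn. ring.
Qed.
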